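(* Let $A$ be a commutative ring and $\sigma$ a hereditary torsion theory on $A$-modules. If $A$ is totally $\sigma$-artinian, then $\sigma$ is of finite type.
   Context: All rings are commutative with identity. $\mathcal{L}(\sigma)$ denotes the Gabriel filter of $\sigma$ (ideals $\mathfrak{h}$ with $A/\mathfrak{h}$ $\sigma$-torsion). $A$ is totally $\sigma$-artinian if for every descending chain of ideals $\mathfrak{a}_1\supseteq\mathfrak{a}_2\supseteq\cdots$ there exist an index $m$ and $\mathfrak{h}\in\mathcal{L}(\sigma)$ with $\mathfrak{a}_m\mathfrak{h}\subseteq\mathfrak{a}_s$ for all $s\ge m$. $\sigma$ is of finite type if $\mathcal{L}(\sigma)$ has a filter basis consisting of finitely generated ideals (every ideal in $\mathcal{L}(\sigma)$ contains a finitely generated ideal in $\mathcal{L}(\sigma)$). *)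

From mathcomp Require Import all_boot all_algebra.
Set Implicit Arguments. Unset Strict Implicit. Unset Printing Implicit Defensive.
Import GRing.Theory.
Local Open Scope ring_scope.

Section Ideals.
Variable A : comPzRingType.

Definition is_ideal (I : A -> Prop) : Prop :=
  [/\ I 0, (forall x y, I x -> I y -> I (x + y)) & (forall a x, I x -> I (a * x))].

Definition ideal_sub (I J : A -> Prop) : Prop := forall x, I x -> J x.

Definition ideal_prod (I J : A -> Prop) : A -> Prop :=
  fun z => exists n (x y : 'I_n -> A),
    (forall i, I (x i) /\ J (y i)) /\ z = \sum_(i < n) x i * y i.

Definition ideal_colon (I : A -> Prop) (a : A) : A -> Prop := fun x => I (a * x).

Definition ideal_cap (I J : A -> Prop) : A -> Prop := fun x => I x /\ J x.

Definition fin_gen (I : A -> Prop) : Prop :=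
  exists n (g : 'I_n -> A),
    forall z, I z <-> exists c : 'I_n -> A, z = \sum_(i < n) c i * g i.

(* Gabriel filter (Stenstrom, Ch. VI): the filter L(sigma) of a hereditary
   torsion theory sigma on A-modules. *)
Definition gabriel_filter (F : (A -> Prop) -> Prop) : Prop :=
  [/\ (forall I, F I -> is_ideal I),
      F (fun _ => True),
      (forall I J, F I -> is_ideal J -> ideal_sub I J -> F J),
      (forall I J, F I -> F J -> F (ideal_cap I J)) &
      ((forall I a, F I -> F (ideal_colon I a)) /\
      (forall I J, F I -> is_ideal J ->
          (forall a, I a -> F (ideal_colon J a)) -> F J))].

Definition totally_artinian (F : (A -> Prop) -> Prop) : Prop :=
  forall a : nat -> (A -> Prop),
    (forall n, is_ideal (a n)) ->
    (forall n, ideal_sub (a n.+1) (a n)) ->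
    exists m, exists h, F h /\
      forall s, (m <= s)%N -> ideal_sub (ideal_prod (a m) h) (a s).

Definition finite_type (F : (A -> Prop) -> Prop) : Prop :=
  forall I, F I -> exists J, [/\ F J, fin_gen J & ideal_sub J I].

End Ideals.

From mathcomp Require Import all_boot all_algebra.
From mathcomp Require Import ring.
From Stdlib Require Import Classical IndefiniteDescription.
Set Implicit Arguments. Unset Strict Implicit. Unset Printing Implicit Defensive.
Import GRing.Theory.
Local Open Scope ring_scope.

(* 1. sigma-minimal principle: in a totally sigma-artinian ring every nonempty
      family S of ideals has an element a such that (b : a) lies in L(sigma)
      for every b in S contained in a.  Otherwise dependent choice yields a
      descending chain violating total sigma-artinianity.
   2. Every ideal K outside L(sigma) lies in a sigma-critical ideal P
      (P not in L(sigma), but P + At in L(sigma) for every t outside P):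
      apply the principle to the ideals K + Ay with (K : y) not in L(sigma).
   3. Given I in L(sigma), take a sigma-minimal Q = P_1 /\ ... /\ P_n among
      intersections of sigma-critical P_i with witnesses t_i in I \ P_i.  The
      finitely generated J = (t_1, ..., t_n) lies in I; if J were not in
      L(sigma), a sigma-critical P above J and some t in I \ P give
      (P : Q) in L(sigma) by minimality, and since t_i is in P while
      P_i + At_i is in L(sigma), the factors of Q can be peeled off one at
      a time, ending with P = (P : A) in L(sigma), a contradiction. *)

Section IdealOperations.
Variable A : comPzRingType.
Implicit Types (I J K P Q : A -> Prop) (t : A).

Definition ideal_quot J Q : A -> Prop := fun z => forall x, Q x -> J (x * z).

Definition adjoin t J : A -> Prop := fun z => exists a w, J w /\ z = t * a + w.

Lemma quot_ideal J Q : is_ideal J -> is_ideal (ideal_quot J Q).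
Proof.
case=> J0 JD JM; split.
- by move=> x _; rewrite mulr0.
- by move=> x y Jx Jy z Qz; rewrite mulrDr; apply: JD; [apply: Jx | apply: Jy].
- by move=> c x Jx z Qz; rewrite mulrCA; apply: JM; apply: Jx.
Qed.

Lemma quot_antitone J Q Q' :
  ideal_sub Q' Q -> ideal_sub (ideal_quot J Q) (ideal_quot J Q').
Proof. by move=> sQ z Hz x Q'x; apply/Hz/sQ. Qed.

Lemma quot_full J : ideal_sub (ideal_quot J (fun _ => True)) J.
Proof. by move=> z /(_ 1 Logic.I); rewrite mul1r. Qed.

Lemma colon_ideal J a : is_ideal J -> is_ideal (ideal_colon J a).
Proof.
case=> J0 JD JM; split; rewrite /ideal_colon.
- by rewrite mulr0.
- by move=> x y Jx Jy; rewrite mulrDr; apply: JD.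
- by move=> c x Jx; rewrite mulrCA; apply: JM.
Qed.

Lemma cap_ideal I J : is_ideal I -> is_ideal J -> is_ideal (ideal_cap I J).
Proof.
case=> I0 ID IM [J0 JD JM]; split => //.
- by move=> x y [? ?] [? ?]; split; [apply: ID | apply: JD].
- by move=> c x [? ?]; split; [apply: IM | apply: JM].
Qed.

Lemma adjoin_ideal t J : is_ideal J -> is_ideal (adjoin t J).
Proof.
case=> J0 JD JM; split.
- by exists 0, 0; split => //; rewrite mulr0 addr0.
- move=> x y [a1 [w1 [Jw1 ->]]] [a2 [w2 [Jw2 ->]]].
  by exists (a1 + a2), (w1 + w2); split; [apply: JD | ring].
- move=> c x [a [w [Jw ->]]].
  by exists (c * a), (c * w); split; [apply: JM | ring].
Qed.

Lemma adjoin_gen t J : is_ideal J -> adjoin t J t.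
Proof. by case=> J0 _ _; exists 1, 0; rewrite mulr1 addr0. Qed.

Lemma sub_adjoin t J : ideal_sub J (adjoin t J).
Proof. by move=> w Jw; exists 0, w; rewrite mulr0 add0r. Qed.

Lemma fin_gen_adjoin t J : fin_gen J -> fin_gen (adjoin t J).
Proof.
move=> [n [g Hg]].
exists n.+1, (fun i => if unlift ord0 i is Some j then g j else t) => z; split.
- move=> [a [w [/(Hg w) [c ->] ->]]].
  exists (fun i => if unlift ord0 i is Some j then c j else a).
  rewrite big_ord_recl /= unlift_none mulrC; congr (_ + _).
  by apply: eq_bigr => i _; rewrite liftK.
- move=> [c ->]; rewrite big_ord_recl unlift_none.
  exists (c ord0), (\sum_(i < n) c (lift ord0 i) * g i); split.
    by apply/Hg; exists (fun i => c (lift ord0 i)).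
  by rewrite mulrC; congr (_ + _); apply: eq_bigr => i _; rewrite liftK.
Qed.

Fixpoint cap_seq (l : seq ((A -> Prop) * A)) : A -> Prop :=
  if l is (P, _) :: l' then ideal_cap P (cap_seq l') else fun _ => True.

Fixpoint span_seq (l : seq ((A -> Prop) * A)) : A -> Prop :=
  if l is (_, t) :: l' then adjoin t (span_seq l') else fun z => z = 0.

Lemma span_seq_ideal l : is_ideal (span_seq l).
Proof.
elim: l => [|[P t] l IHl] /=; last exact: adjoin_ideal.
by split => // [x y -> ->|c x ->]; rewrite ?addr0 ?mulr0.
Qed.

Lemma span_seq_fin_gen l : fin_gen (span_seq l).
Proof.
elim: l => [|[P t] l IHl] /=; last exact: fin_gen_adjoin.
exists 0%N, (fun _ => 0) => z; split => [->|[c ->]]; last by rewrite big_ord0.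
by exists (fun _ => 0); rewrite big_ord0.
Qed.

Lemma span_seq_sub I l : is_ideal I ->
  (forall P t, List.In (P, t) l -> I t) -> ideal_sub (span_seq l) I.
Proof.
case=> I0 ID IM; elim: l => [|[P t] l IHl] /= Hl; first by move=> z ->.
move=> z [a [w [Sw ->]]]; apply: ID.
- by rewrite mulrC; apply/IM/(Hl P); left.
- by apply: IHl Sw => P' t' Hin; apply: (Hl P'); right.
Qed.

End IdealOperations.

Section TotallyArtinian.
Variable A : comPzRingType.
Variable F : (A -> Prop) -> Prop.
Hypothesis gF : gabriel_filter F.
Hypothesis tA : totally_artinian F.
Implicit Types (I J K P Q : A -> Prop) (t : A).

Lemma filter_ideal I : F I -> is_ideal I.
Proof. by case: gF => H _ _ _ _; apply: H. Qed.

Lemma filter_up I J : F I -> is_ideal J -> ideal_sub I J -> F J.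
Proof. by case: gF => _ _ H _ _; apply: H. Qed.

Lemma filter_cap I J : F I -> F J -> F (ideal_cap I J).
Proof. by case: gF => _ _ _ H _; apply: H. Qed.

Lemma filter_trans I J :
  F I -> is_ideal J -> (forall a, I a -> F (ideal_colon J a)) -> F J.
Proof. by case: gF => _ _ _ _ [_ H]; apply: H. Qed.

(* (K : x) is the whole ring, hence in the filter, when x lies in K. *)
Lemma filter_colon_mem K x : is_ideal K -> K x -> F (ideal_colon K x).
Proof.
move=> iK Kx; have [_ _ KM] := iK.
apply: (filter_up (I := fun _ => True)); first by case: gF.
  exact: colon_ideal.
by move=> z _; rewrite /ideal_colon mulrC; apply: KM.
Qed.

Lemma filter_quot_antitone J Q Q' :
  is_ideal J -> ideal_sub Q' Q -> F (ideal_quot J Q) -> F (ideal_quot J Q').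
Proof.
by move=> iJ sQ FQ; apply: (filter_up FQ (quot_ideal _ iJ)); apply: quot_antitone.
Qed.

Definition sigma_minimal (S : (A -> Prop) -> Prop) (a : A -> Prop) : Prop :=
  S a /\ forall b, S b -> ideal_sub b a -> F (ideal_quot b a).

Lemma sigma_minimal_exists (S : (A -> Prop) -> Prop) a0 :
  (forall b, S b -> is_ideal b) -> S a0 -> exists a, sigma_minimal S a.
Proof.
move=> Sid Sa0; apply: NNPP => noMin.
have descent (a : {a | S a}) : exists b : {b | S b},
    ideal_sub (proj1_sig b) (proj1_sig a) /\
    ~ F (ideal_quot (proj1_sig b) (proj1_sig a)).
  apply: NNPP => noDescent; apply: noMin; exists (proj1_sig a).
  split=> [|b Sb sba]; first exact: proj2_sig.
  by apply: NNPP => nF; apply: noDescent; exists (exist _ b Sb).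
have [step stepP] := functional_choice _ descent.
pose chain n := proj1_sig (iter n step (exist _ a0 Sa0)).
have [m [h [Fh chain_h]]] :=
  @tA chain (fun n => Sid _ (proj2_sig _)) (fun n => proj1 (stepP _)).
apply: (proj2 (stepP (iter m step (exist _ a0 Sa0)))).
apply: (filter_up Fh (quot_ideal _ (Sid _ (proj2_sig _)))) => z hz x ax.
apply: (chain_h m.+1 (leqnSn m)); exists 1%N, (fun _ => x), (fun _ => z).
by rewrite big_ord1.
Qed.

Definition sigma_critical P : Prop :=
  [/\ is_ideal P, ~ F P & forall t, ~ P t -> F (adjoin t P)].

Lemma filter_colon_ideal K y :
  is_ideal K -> is_ideal (fun w => F (ideal_colon K (y * w))).
Proof.
move=> iK; have [K0 KD KM] := iK; split.
- by apply: filter_colon_mem; rewrite ?mulr0.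
- move=> x1 x2 F1 F2; apply: (filter_up (filter_cap F1 F2)); first exact: colon_ideal.
  by move=> z [h1 h2]; rewrite /ideal_colon mulrDr mulrDl; apply: KD.
- move=> c x Fx; apply: (filter_up Fx); first exact: colon_ideal.
  move=> z hz; rewrite /ideal_colon.
  have -> : y * (c * x) * z = c * (y * x * z) by ring.
  exact: KM.
Qed.

Lemma critical_above K :
  is_ideal K -> ~ F K -> exists P, sigma_critical P /\ ideal_sub K P.
Proof.
move=> iK nFK; have [_ _ KM] := iK.
pose S b := exists y, ~ F (ideal_colon K y) /\ b = adjoin y K.
have Sid b : S b -> is_ideal b by move=> [y [_ ->]]; exact: adjoin_ideal.
have S1 : S (adjoin 1 K).
  exists 1; split => // F1; apply: nFK; apply: (filter_up F1 iK) => x.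
  by rewrite /ideal_colon mul1r.
have [_ [[y [nFy ->]] minS]] := sigma_minimal_exists Sid S1.
pose P w := F (ideal_colon K (y * w)).
have iP : is_ideal P := filter_colon_ideal y iK.
exists P; split; last by move=> k Kk; apply: filter_colon_mem => //; apply: KM.
split => // [FP | t nPt].
- apply: nFy; apply: (filter_trans FP); first exact: colon_ideal.
  move=> w Pw; apply: (filter_up Pw); first by do 2 apply: colon_ideal.
  by move=> z; rewrite /ideal_colon mulrA.
- have sub : ideal_sub (adjoin (y * t) K) (adjoin y K).
    by move=> z [a [w [Kw ->]]]; exists (t * a), w; rewrite mulrA.
  have Fq := minS _ (ex_intro _ (y * t) (conj nPt erefl)) sub.
  apply: (filter_up Fq); first exact: adjoin_ideal.
  move=> z /(_ _ (adjoin_gen y iK)) [a [w [Kw Ew]]].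
  exists a, (z - t * a); split; last by rewrite addrC subrK.
  apply: filter_colon_mem => //.
  by have -> : y * (z - t * a) = w by rewrite mulrDr Ew; ring.
Qed.

Lemma quot_peel P Pi ti Q' :
  is_ideal P -> is_ideal Pi -> is_ideal Q' -> P ti -> F (adjoin ti Pi) ->
  F (ideal_quot P (ideal_cap Pi Q')) -> F (ideal_quot P Q').
Proof.
move=> iP [_ _ PiM] [_ _ Q'M] Pti Fadj FY; have [_ PD PM] := iP.
apply: (filter_trans FY); first exact: quot_ideal.
move=> z Yz; apply: (filter_up Fadj); first by apply/colon_ideal/quot_ideal.
move=> w [a [p [Pip ->]]] q Q'q.
have -> : q * (z * (ti * a + p)) = (q * z * a) * ti + (q * p) * z by ring.
apply: PD; first exact: PM.
by apply: Yz; split; [apply: PiM | rewrite mulrC; apply: Q'M].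
Qed.

Definition critical_family I (l : seq ((A -> Prop) * A)) : Prop :=
  forall P t, List.In (P, t) l -> [/\ sigma_critical P, I t & ~ P t].

Lemma cap_seq_ideal I l : critical_family I l -> is_ideal (cap_seq l).
Proof.
elim: l => [|[P t] l IHl] /= crit; first by split.
have [[iP _ _] _ _] := crit P t (or_introl erefl).
by apply: cap_ideal iP (IHl _) => P' t' Hin; apply: crit; right.
Qed.

Lemma quot_peel_seq I P l Q' :
  is_ideal P -> critical_family I l -> ideal_sub (span_seq l) P -> is_ideal Q' ->
  F (ideal_quot P (ideal_cap (cap_seq l) Q')) -> F (ideal_quot P Q').
Proof.
move=> iP; elim: l Q' => [|[Pi ti] l IHl] Q' /= crit spanP iQ'.
  by apply: filter_quot_antitone.
have [[iPi _ adjPi] _ nPti] := crit Pi ti (or_introl erefl).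
have crit' : critical_family I l by move=> P' t' Hin; apply: crit; right.
move=> FQ; apply: (quot_peel iP iPi iQ' _ (adjPi _ nPti)).
  exact/spanP/adjoin_gen/span_seq_ideal.
apply: (IHl _ crit' (fun w Sw => spanP _ (sub_adjoin _ Sw)) (cap_ideal iPi iQ')).
by apply: (filter_quot_antitone iP _ FQ) => x [Qx [Pix Q'x]].
Qed.

Theorem totally_artinian_finite_type : finite_type F.
Proof.
move=> I FI; have iI := filter_ideal FI.
pose S Q := exists l, critical_family I l /\ Q = cap_seq l.
have Sid Q : S Q -> is_ideal Q by move=> [l [crit ->]]; exact: cap_seq_ideal crit.
have S0 : S (fun _ => True) by exists [::].
have [_ [[l [crit ->]] minS]] := sigma_minimal_exists Sid S0.
have spanI : ideal_sub (span_seq l) I.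
  by apply: span_seq_sub => // P t /crit [].
exists (span_seq l); split=> //; last exact: span_seq_fin_gen.
apply: NNPP => nFspan.
have [P [[iP nFP critP] spanP]] := critical_above (span_seq_ideal l) nFspan.
have [t [It nPt]] : exists t, I t /\ ~ P t.
  apply: NNPP => noT; apply: nFP; apply: (filter_up FI iP) => x Ix.
  by apply: NNPP => nPx; apply: noT; exists x.
have crit' : critical_family I ((P, t) :: l).
  by move=> P' t' [[<- <-] | /crit].
have FPQ := minS _ (ex_intro _ _ (conj crit' erefl)) (fun x Hx => proj2 Hx).
have FP : F (ideal_quot P (fun _ => True)).
  apply: (quot_peel_seq iP crit spanP _); first by split.
  by apply: (filter_up FPQ (quot_ideal _ iP)) => z Hz x [Qx _]; case: (Hz x Qx).
by apply: nFP; apply: (filter_up FP iP); apply: quot_full.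
Qed.

End TotallyArtinian.

Theorem mainTheorem2 (A : comPzRingType) (F : (A -> Prop) -> Prop) :
  gabriel_filter F -> totally_artinian F -> finite_type F.
Proof. by move=> gF tA; apply: totally_artinian_finite_type. Qed.
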